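(* Let $p>5$ be a prime, $q=p^h$, and let $\mathcal{F}$ be the projective closure of $ax^n+by^m=1$ over $\mathbb{F}_q$, with $a,b\in\mathbb{F}_q^*$ and $m,n$ positive integers with $n\ge m>2$. If $p\mid(2n-1)$ and $p\mid(m-1)$, then $\mathcal{F}$ is $\mathbb{F}_q$-Frobenius classical with respect to conics.
   Context: With $\varphi_0,\dots,\varphi_5$ the monomials of degree 2 in $x,y,1$, $\tau$ separating and $D^{(k)}_\tau$ Hasse derivatives, the $\mathbb{F}_q$-Frobenius order sequence w.r.t. conics is the lexicographically smallest $\nu_0<\dots<\nu_4$ such that the $6\times6$ determinant with first row $(\varphi_j^q)_j$ and rows $(D^{(\nu_i)}_\tau\varphi_j)_j$ is nonzero; the curve is $\mathbb{F}_q$-Frobenius classical w.r.t. conics if $\nu_i=i$ for all $i$. *)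

From HB Require Import structures.
From mathcomp Require Import all_boot all_order all_algebra.
Set Implicit Arguments. Unset Strict Implicit. Unset Printing Implicit Defensive.
Import Order.TTheory GRing.Theory Num.Theory.
Local Open Scope ring_scope.

(* Function field setting: F = F_q, K a field containing F (via iota),
   x y in K with x transcendental over F.  The subfield F(x,y) of K is then
   the function field of the curve, and [D] is a Hasse derivation
   (w.r.t. the separating variable tau = x). *)

Definition transcendental_over (F K : fieldType) (iota : {rmorphism F -> K})
  (x : K) : Prop :=
  forall P : {poly F}, P != 0 -> (map_poly iota P).[x] != 0.

Definition hasse_derivation_wrt (F K : fieldType) (iota : {rmorphism F -> K})
  (x : K) (D : nat -> K -> K) : Prop :=
  (forall u, D 0%N u = u) /\
  (forall k u v, D k (u + v) = D k u + D k v) /\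
  (forall k u v, D k (u * v) = \sum_(i < k.+1) D i u * D (k - i)%N v) /\
  (forall k c, (0 < k)%N -> D k (iota c) = 0) /\
  D 1%N x = 1 /\
  (forall k, (1 < k)%N -> D k x = 0).

Definition conic_monomials (K : fieldType) (x y : K) : 'I_6 -> K :=
  fun j => nth 0 [:: 1; x; y; x ^+ 2; x * y; y ^+ 2] j.

Definition frobenius_mx (K : fieldType) (q : nat) (D : nat -> K -> K)
  (phi : 'I_6 -> K) (nu : 'I_5 -> nat) : 'M[K]_6 :=
  \matrix_(i < 6, j < 6)
     match unlift ord0 i with
     | Some i' => D (nu i') (phi j)
     | None => phi j ^+ q
     end.

Definition strictly_increasing5 (nu : 'I_5 -> nat) : Prop :=
  forall i j : 'I_5, (i < j)%N -> (nu i < nu j)%N.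

Definition frob_admissible (K : fieldType) (q : nat) (D : nat -> K -> K)
  (phi : 'I_6 -> K) (nu : 'I_5 -> nat) : Prop :=
  strictly_increasing5 nu /\ \det (frobenius_mx q D phi nu) != 0.

Definition lex_lt5 (nu mu : 'I_5 -> nat) : Prop :=
  exists k : 'I_5, (forall i : 'I_5, (i < k)%N -> nu i = mu i) /\ (nu k < mu k)%N.

Definition is_frobenius_orders (K : fieldType) (q : nat) (D : nat -> K -> K)
  (phi : 'I_6 -> K) (nu : 'I_5 -> nat) : Prop :=
  frob_admissible q D phi nu /\
  forall mu, frob_admissible q D phi mu -> (forall i, nu i = mu i) \/ lex_lt5 nu mu.

Definition frobenius_classical_conics (K : fieldType) (q : nat)
  (D : nat -> K -> K) (x y : K) : Prop :=
  is_frobenius_orders q D (conic_monomials x y) (fun i : 'I_5 => (i : nat)).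

From HB Require Import structures.
From mathcomp Require Import all_boot all_order all_algebra finfield.
From mathcomp Require Import ring zify.

(* Since p divides 2n - 1 and m - 1, E = a^2 x^(2n-1) and B = b y^(m-1) are
   p-th powers, hence constants for the Hasse derivatives D^(k), k < p, and the
   curve lies on the parabola (1 - B y)^2 = E x, both sides being (a x^n)^2.
   Applying D^(0), ..., D^(4) to this equation shows that the coefficient
   column of the parabola is killed by the five derivative rows of the
   Frobenius matrix, while the Frobenius row pairs it with
   (1 - B y^q)^2 - E x^q, which is nonzero by a degree argument in the
   transcendental x.  The determinant is thus nonzero once the derivative rows
   are independent, which by elimination amounts to D3(y)^2 != D2(y) D4(y).
   As z = a x^n = 1 - B y, this is D3(z)^2 != D2(z) D4(z), and solving the
   Leibniz relations for D^(k)(z^2) = E D^(k)(x) gives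
   D3(z)^2 - D2(z) D4(z) = - E^6 / (2 z)^10. *)

Set Implicit Arguments.
Unset Strict Implicit.
Unset Printing Implicit Defensive.

Import GRing.Theory.
Local Open Scope ring_scope.

Lemma cramer2_eq0 (K : fieldType) (a b c d s t : K) : a * d - c * b != 0 ->
  s * a + t * b = 0 -> s * c + t * d = 0 -> s = 0 /\ t = 0.
Proof.
move=> det_neq0 e1 e2; rewrite -[s](mulfK det_neq0) -[t](mulfK det_neq0).
have -> : s * (a * d - c * b) = d * (s * a + t * b) - b * (s * c + t * d).
  by ring.
have -> : t * (a * d - c * b) = a * (s * c + t * d) - c * (s * a + t * b).
  by ring.
by rewrite e1 e2 !mulr0 subrr !mul0r.
Qed.

Lemma det_neq0_row'_free (R : fieldType) n (M : 'M[R]_n.+1) (c : 'cV_n.+1) :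
  row_free (row' 0 M) -> row' 0 M *m c = 0 -> (M *m c) 0 0 != 0 ->
  \det M != 0.
Proof.
move=> free_M' M'c0 Mc0_neq0; rewrite -unitfE -unitmxE -row_free_unit.
apply: inj_row_free => v vM0.
have v0 : v 0 0 = 0.
  have : (v *m (M *m c)) 0 0 = 0 by rewrite mulmxA vM0 mul0mx mxE.
  rewrite mxE big_ord_recl big1 ?addr0 => [/eqP|i _].
    by rewrite mulf_eq0 (negbTE Mc0_neq0) orbF => /eqP.
  have := congr1 (fun A : 'cV_n => A i 0) M'c0.
  by rewrite row'Esub mul_rowsub_mx !mxE => ->; rewrite mulr0.
have w0 : \row_i v 0 (lift 0 i) = 0.
  apply: (row_free_inj free_M'); rewrite mul0mx -vM0.
  apply/rowP => j; rewrite !mxE big_ord_recl v0 mul0r add0r.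
  by apply: eq_bigr => i _; rewrite !mxE.
apply/rowP => i; rewrite mxE; have [j ->| ->] := unliftP 0 i; last exact: v0.
by have := congr1 (fun A : 'rV_n => A 0 j) w0; rewrite !mxE.
Qed.

Lemma id_eq_or_lex_lt5 (mu : 'I_5 -> nat) : strictly_increasing5 mu ->
  (forall i, (fun i : 'I_5 => i : nat) i = mu i) \/
  lex_lt5 (fun i : 'I_5 => i : nat) mu.
Proof.
move=> mu_incr.
have le_mu (i : 'I_5) : (i <= mu i)%N.
  case: i => i lti5; elim: i lti5 => // i IHi lti5.
  have := mu_incr (Ordinal (ltnW lti5)) (Ordinal lti5) (ltnSn i).
  exact: leq_ltn_trans (IHi _).
have [mu_id | ] := boolP [forall i, mu i == i].
  by left=> i; rewrite (eqP (forallP mu_id i)).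
rewrite negb_forall => /existsP[i0 mu_i0]; right.
have [k mu_k k_min] :=
  @arg_minnP _ i0 (fun i => mu i != i) (fun i => i : nat) mu_i0.
exists k; split=> [i ltik|]; last by rewrite ltn_neqAle eq_sym mu_k le_mu.
apply: contraTeq ltik; rewrite eq_sym -leqNgt; exact: k_min.
Qed.

Lemma is_frobenius_orders_id (K : fieldType) q (D : nat -> K -> K) phi :
  \det (frobenius_mx q D phi (fun i : 'I_5 => i : nat)) != 0 ->
  is_frobenius_orders q D phi (fun i : 'I_5 => i : nat).
Proof.
move=> det_neq0; split=> [|mu [mu_incr _]]; first by split.
exact: id_eq_or_lex_lt5.
Qed.

Section HasseDerivation.

Variables (K : fieldType) (D : nat -> K -> K).
Hypothesis hasse0E : forall u, D 0 u = u.
Hypothesis hasseD : forall k u v, D k (u + v) = D k u + D k v.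
Hypothesis hasseM :
  forall k u v, D k (u * v) = \sum_(i < k.+1) D i u * D (k - i) v.
Hypothesis hasse1 : forall k, (0 < k)%N -> D k 1 = 0.

Lemma hasse_0 k : D k 0 = 0.
Proof. by apply: (@addrI _ (D k 0)); rewrite -hasseD !addr0. Qed.

Lemma hasse_sum k I (r : seq I) (P : pred I) (f : I -> K) :
  D k (\sum_(i <- r | P i) f i) = \sum_(i <- r | P i) D k (f i).
Proof. exact: (big_morph _ (hasseD k) (hasse_0 k)). Qed.

Lemma hasse_exp_coef N w e i :
  (i < N)%N -> D i (w ^+ e) = ((\poly_(j < N) D j w) ^+ e)`_i.
Proof.
elim: e i => [|e IHe] i ltiN.
  by rewrite !expr0 coef1; case: i ltiN => [|i] _; rewrite ?hasse0E ?hasse1.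
rewrite !exprSr hasseM coefM; apply: eq_bigr => j _.
rewrite IHe ?coef_poly; last exact: leq_ltn_trans (leq_ord j) ltiN.
by rewrite (leq_ltn_trans (leq_subr _ _) ltiN).
Qed.

(* D^(i)(w^p) is the coefficient of X^i in (w + X Q)^p = w^p + X^p Q^p. *)
Lemma hasse_frobenius p w i :
  p \in [pchar K] -> (0 < i < p)%N -> D i (w ^+ p) = 0.
Proof.
move=> charKp /andP[i_gt0 ltip]; have p_gt0 := ltn_trans i_gt0 ltip.
rewrite (@hasse_exp_coef p) //.
have -> : \poly_(j < p) D j w = w%:P + 'X * \poly_(j < p.-1) D j.+1 w.
  apply/polyP => k; rewrite coefD coefC coefXM !coef_poly.
  by case: k => [|k] /=; rewrite ?p_gt0 ?hasse0E ?addr0 // add0r ltn_predRL.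
have charPp : p \in [pchar {poly K}] by rewrite pchar_poly.
rewrite -(pFrobenius_autE charPp) pFrobenius_autD_comm; last exact: mulrC.
rewrite !pFrobenius_autE exprMn -rmorphXn coefD coefC coefXnM ltip.
by rewrite addr0 -[i == 0]negbK -lt0n i_gt0.
Qed.

Variable p : nat.

Definition hasse_const c := forall j, (0 < j < p)%N -> D j c = 0.

Lemma hasse_constX w e :
  p \in [pchar K] -> (p %| e)%N -> hasse_const (w ^+ e).
Proof.
move=> charKp /dvdnP[t ->] j ltjp; rewrite exprM.
exact: hasse_frobenius.
Qed.

Lemma hasse_mul_const c v k :
  hasse_const c -> (k < p)%N -> D k (c * v) = c * D k v.
Proof.
move=> cc ltkp; rewrite hasseM big_ord_recl hasse0E subn0 big1 ?addr0 // => i _.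
by rewrite lift0 cc ?mul0r // (leq_ltn_trans (ltn_ord i) ltkp).
Qed.

Lemma hasse_constM c1 c2 :
  hasse_const c1 -> hasse_const c2 -> hasse_const (c1 * c2).
Proof.
move=> cc1 cc2 j /andP[j_gt0 ltjp].
by rewrite (hasse_mul_const _ cc1 ltjp) cc2 ?mulr0 ?j_gt0.
Qed.

Lemma hasse_const0 : hasse_const 0.
Proof. by move=> j _; apply: hasse_0. Qed.

Lemma hasse_const1 : hasse_const 1.
Proof. by move=> j /andP[j_gt0 _]; apply: hasse1. Qed.

Lemma hasse_constD c1 c2 :
  hasse_const c1 -> hasse_const c2 -> hasse_const (c1 + c2).
Proof. by move=> cc1 cc2 j ltjp; rewrite hasseD cc1 ?cc2 ?addr0. Qed.

Lemma hasse_constN c : hasse_const c -> hasse_const (- c).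
Proof.
move=> cc j ltjp; apply: (addIr (D j c)).
by rewrite -hasseD addNr hasse_0 cc ?addr0.
Qed.

Lemma frobenius_mx_det_neq0 q (phi c : 'I_6 -> K) (nu : 'I_5 -> nat) :
  (forall i, nu i < p)%N -> (forall j, hasse_const (c j)) ->
  \sum_j c j * phi j = 0 -> \sum_j c j * phi j ^+ q != 0 ->
  row_free (\matrix_(i, j) D (nu i) (phi j)) ->
  \det (frobenius_mx q D phi nu) != 0.
Proof.
move=> lt_nu_p cc c_phi0 c_phiq_neq0 free_D.
have M'E : row' 0 (frobenius_mx q D phi nu) = \matrix_(i, j) D (nu i) (phi j).
  by apply/matrixP => i j; rewrite !mxE liftK.
apply: (det_neq0_row'_free (c := \col_j c j)); rewrite ?M'E //.
  apply/colP => i; rewrite !mxE; transitivity (D (nu i) (\sum_j c j * phi j)).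
    rewrite hasse_sum; apply: eq_bigr => j _.
    by rewrite !mxE mulrC hasse_mul_const.
  by rewrite c_phi0 hasse_0.
rewrite mxE; under eq_bigr do rewrite !mxE unlift_none mulrC.
exact: c_phiq_neq0.
Qed.

Variable x : K.
Hypothesis hasse_x1 : D 1 x = 1.
Hypothesis hasse_x : forall k, (1 < k)%N -> D k x = 0.

Lemma hasse_mulx k u : (0 < k)%N -> D k (x * u) = x * D k u + D k.-1 u.
Proof.
case: k => // k _; rewrite hasseM !big_ord_recl big1 ?addr0 => [|i _].
  by rewrite /= hasse0E hasse_x1 mul1r subn0 subSS subn0.
by rewrite hasse_x ?mul0r.
Qed.

Definition hasse_hankel u := D 3 u ^+ 2 - D 2 u * D 4 u.

Lemma hasse_hankel_affine B z y :
  (4 < p)%N -> hasse_const B -> z + B * y = 1 ->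
  hasse_hankel z = B ^+ 2 * hasse_hankel y.
Proof.
move=> p_gt4 cB zBy1.
have Dz k : (0 < k < 5)%N -> D k z = - (B * D k y).
  case/andP=> k_gt0 ltk5; apply/eqP.
  rewrite -addr_eq0 -hasse_mul_const -?hasseD ?zBy1 ?hasse1 //; lia.
by rewrite /hasse_hankel !Dz //; ring.
Qed.

Lemma hasse_hankel_sqrt E z :
  p \in [pchar K] -> (4 < p)%N -> hasse_const E -> z != 0 -> z * z = E * x ->
  hasse_hankel z != 0.
Proof.
move=> charKp p_gt4 cE z_neq0 zzE.
have two_neq0 : 2%:R != 0 :> K.
  by rewrite -(dvdn_pcharf charKp); apply/negP => /dvdn_leq; lia.
have E_neq0 : E != 0.
  apply: contra_neq z_neq0 => E0; apply/eqP.
  by rewrite -[z == 0]orbb -mulf_eq0 zzE E0 mul0r.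
have Dzz k : (k < 5)%N -> D k (z * z) = E * D k x.
  by move=> ltk5; rewrite zzE hasse_mul_const //; lia.
have Dzz0 k : (1 < k < 5)%N -> D k (z * z) = 0.
  by case/andP=> k_gt1 ltk5; rewrite Dzz // hasse_x // mulr0.
have e1 : 2%:R * z * D 1 z = E.
  move: (Dzz 1%N isT); rewrite hasse_x1 mulr1 hasseM => <-.
  by rewrite !big_ord_recl big_ord0 !lift0 /= hasse0E; ring.
have e2 : 2%:R * z * D 2 z + D 1 z ^+ 2 = 0.
  rewrite -(Dzz0 2%N) // hasseM !big_ord_recl big_ord0 !lift0 /=.
  by rewrite hasse0E; ring.
have e3 : 2%:R * z * D 3 z + 2%:R * D 1 z * D 2 z = 0.
  rewrite -(Dzz0 3%N) // hasseM !big_ord_recl big_ord0 !lift0 /=.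
  by rewrite hasse0E; ring.
have e4 : 2%:R * z * D 4 z + (2%:R * D 1 z * D 3 z + D 2 z ^+ 2) = 0.
  rewrite -(Dzz0 4%N) // hasseM !big_ord_recl big_ord0 !lift0 /=.
  by rewrite hasse0E; ring.
have z2_neq0 : 2%:R * z != 0 by rewrite mulf_neq0.
have solve u v : 2%:R * z * u + v = 0 -> u = - v / (2%:R * z).
  by move/(canRL (addrK _)); rewrite add0r => <-; rewrite mulrC mulKf.
have Dz1 : D 1 z = E / (2%:R * z).
  by rewrite -e1 mulrC mulKf.
suff -> : hasse_hankel z = - E ^+ 6 / (2%:R ^+ 10 * z ^+ 10).
  by rewrite mulf_neq0 ?oppr_eq0 ?invr_eq0 ?mulf_neq0 ?expf_neq0.
rewrite /hasse_hankel (solve _ _ e4) (solve _ _ e3) (solve _ _ e2) Dz1.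
field; rewrite z_neq0 two_neq0 andbT /=.
by rewrite (_ : 1024%:R = 2%:R ^+ 10 :> K) ?expf_neq0 // -natrX.
Qed.

Lemma conic_hasse_row_free y : hasse_hankel y != 0 ->
  row_free (\matrix_(i < 5, j < 6) D i (conic_monomials x y j)).
Proof.
move=> hy_neq0; apply: inj_row_free => w wH0.
pose v k := w 0 (inord k).
have col j : \sum_(k < 5) v k * D k (conic_monomials x y j) = 0.
  transitivity ((w *m \matrix_(i < 5, j < 6) D i (conic_monomials x y j)) 0 j).
    by rewrite mxE; apply: eq_bigr => i _; rewrite mxE /v inord_val.
  by rewrite wH0 mxE.
have := col (@Ordinal 6 4 isT); have := col (@Ordinal 6 3 isT).
have := col (@Ordinal 6 2 isT); have := col (@Ordinal 6 1 isT).
have := col (@Ordinal 6 0 isT).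
rewrite /conic_monomials /= expr2 !big_ord_recl !big_ord0 !lift0 /=.
rewrite !hasse0E !hasse_mulx //= !hasse0E hasse_x1 !hasse_x // !hasse1 //.
rewrite !(mulr0, mulr1, addr0, add0r) => v0; rewrite v0 !(mul0r, add0r) => v1.
rewrite v1 !(mul0r, add0r, mulr1) => e2 v2; rewrite v2 !(mul0r, add0r) in e2 *.
move=> e4.
have e4' : v 3%N * D 2 y + v 4%N * D 3 y = 0.
  have := congr2 (fun s t => t - x * s) e2 e4; rewrite /= mulr0 subrr => e.
  by rewrite -[RHS]e; ring.
have [|v3 v4] := cramer2_eq0 _ e2 e4'; first by rewrite -expr2.
by apply/rowP => i; rewrite mxE -[i]inord_val; case: i => [[|[|[|[|[|k]]]]] hk].
Qed.

Lemma frobenius_classical_of_parabola q y E B :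
  p \in [pchar K] -> (4 < p)%N -> hasse_const E -> hasse_const B ->
  1 - B * y != 0 -> (1 - B * y) ^+ 2 = E * x ->
  (1 - B * y ^+ q) ^+ 2 != E * x ^+ q ->
  frobenius_classical_conics q D x y.
Proof.
move=> charKp p_gt4 cE cB yB_neq0 y_parabola frob_off.
apply/is_frobenius_orders_id/(frobenius_mx_det_neq0
  (c := nth 0 [:: 1; - E; - (B *+ 2); 0; 0; B ^+ 2])).
- by move=> i; apply: leq_trans (ltn_ord i) p_gt4.
- case=> [[|[|[|[|[|[|j]]]]]] lt_j6] //=.
  + exact: hasse_const1.
  + exact: hasse_constN.
  + by rewrite mulr2n; apply/hasse_constN/hasse_constD.
  + exact: hasse_const0.
  + exact: hasse_const0.
  + by rewrite expr2; apply: hasse_constM.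
- rewrite /conic_monomials !big_ord_recl big_ord0 !lift0 /=.
  transitivity ((1 - B * y) ^+ 2 - E * x); first by ring.
  by rewrite y_parabola subrr.
- rewrite /conic_monomials !big_ord_recl big_ord0 !lift0 /=.
  rewrite expr1n !(exprAC _ 2).
  rewrite (_ : _ + _ = (1 - B * y ^+ q) ^+ 2 - E * x ^+ q) ?subr_eq0 //.
  by ring.
apply: conic_hasse_row_free.
rewrite expr2 in y_parabola.
have := hasse_hankel_sqrt charKp p_gt4 cE yB_neq0 y_parabola.
rewrite (hasse_hankel_affine p_gt4 cB (subrK _ _)) mulf_eq0 negb_or.
by case/andP.
Qed.

End HasseDerivation.

Lemma transcendental_eval_inj (F K : fieldType) (iota : {rmorphism F -> K})
    x (P Q : {poly F}) :
  transcendental_over iota x -> (map_poly iota P).[x] = (map_poly iota Q).[x] ->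
  P = Q.
Proof.
move=> tr_x PQx; apply/eqP; rewrite -subr_eq0; apply/negPn/negP => /tr_x.
by rewrite rmorphB hornerD hornerN PQx subrr eqxx.
Qed.

Lemma transcendental_neq0 (F K : fieldType) (iota : {rmorphism F -> K}) x :
  transcendental_over iota x -> x != 0.
Proof. by move/(_ 'X); rewrite polyX_eq0 map_polyX hornerX; apply. Qed.

Lemma size_exp_1_subCXn (F : idomainType) (c : F) k e :
  c != 0 -> (0 < k)%N -> (size ((1 - c%:P * 'X^k) ^+ e)).-1 = (k * e)%N.
Proof.
move=> c_neq0 k_gt0; rewrite size_exp addrC size_polyDl.
  by rewrite size_polyN size_Cmul // size_polyXn.
by rewrite size_polyN size_Cmul // size_polyXn size_poly1.
Qed.

(* If equality held, b y^(m-1+q) = 1 -+ a x^(n+(q-1)/2); raising this to the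
   m-th power and b y^m = 1 - a x^n to the (m-1+q)-th gives a polynomial
   identity in x whose sides have degrees n (m-1+q) and (n+(q-1)/2) m. *)
Lemma fermat_frobenius_off_conic (F K : fieldType) (iota : {rmorphism F -> K})
    (a b : F) n m q (x y : K) :
  transcendental_over iota x -> a != 0 -> b != 0 -> b ^+ q = b ->
  (0 < m <= n)%N -> odd q -> (1 < q)%N ->
  iota a * x ^+ n + iota b * y ^+ m = 1 ->
  (1 - iota b * y ^+ (m - 1) * y ^+ q) ^+ 2
    != iota (a ^+ 2) * x ^+ (2 * n - 1) * x ^+ q.
Proof.
move=> tr_x a_neq0 b_neq0 bq /andP[m_gt0 le_mn] odd_q q_gt1 fermat_xy.
set N := (m - 1 + q)%N; set r := q./2.
have q_r : q = (2 * r + 1)%N.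
  by rewrite -[LHS]odd_double_half odd_q -mul2n addnC.
rewrite -!mulrA -!exprD -/N.
have -> : iota (a ^+ 2) * x ^+ (2 * n - 1 + q) = (iota a * x ^+ (n + r)) ^+ 2.
  by rewrite rmorphXn exprMn -exprM; congr (_ * _ ^+ _); lia.
rewrite eqf_sqr; apply/negP => /orP yx.
have [e e_neq0 ye] :
    exists2 e : F, e != 0 & iota b * y ^+ N = 1 - iota e * x ^+ (n + r).
  case: yx => /eqP yx; [exists a | exists (- a)]; rewrite ?oppr_eq0 //.
    by rewrite -yx; ring.
  by rewrite rmorphN mulNr -yx; ring.
have yb : iota b * y ^+ m = 1 - iota a * x ^+ n by rewrite -fermat_xy; ring.
have bN : b ^+ N = b ^+ m by rewrite exprD bq -exprSr subn1 prednK.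
have key : (1 - iota a * x ^+ n) ^+ N = (1 - iota e * x ^+ (n + r)) ^+ m.
  by rewrite -yb -ye !exprMn -!rmorphXn bN -!exprM mulnC.
have := @transcendental_eval_inj _ _ _ _ ((1 - a%:P * 'X^n) ^+ N)
  ((1 - e%:P * 'X^(n + r)) ^+ m) tr_x.
rewrite !rmorphXn !rmorphB !rmorph1 !rmorphM /= !map_polyC !map_polyXn !hornerE.
move=> /(_ key) /(congr1 (fun P : {poly F} => (size P).-1)).
rewrite !size_exp_1_subCXn //; [nia | lia | lia].
Qed.

Theorem proposition3p13
  (p h : nat) (F : finFieldType) (K : fieldType) (iota : {rmorphism F -> K})
  (a b : F) (n m : nat) (x y : K) (D : nat -> K -> K) :
  prime p -> (5 < p)%N -> #|F| = (p ^ h)%N ->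
  a != 0 -> b != 0 ->
  (m <= n)%N -> (2 < m)%N ->
  (p %| (2 * n - 1))%N -> (p %| (m - 1))%N ->
  transcendental_over iota x ->
  iota a * x ^+ n + iota b * y ^+ m = 1 ->
  hasse_derivation_wrt iota x D ->
  frobenius_classical_conics (p ^ h)%N D x y.
Proof.
move=> p_pr p_gt5 cardF a_neq0 b_neq0 le_mn m_gt2 p_dvd_X p_dvd_Y tr_x fermat_xy
  [hasse0E [hasseD [hasseM [hasse_iota [hasse_x1 hasse_x]]]]].
have charKp : p \in [pchar K].
  by rewrite (fmorph_pchar iota) (card_finPcharP cardF).
have hasse1 k : (0 < k)%N -> D k 1 = 0.
  by rewrite -(rmorph1 iota); apply: hasse_iota.
have const_iota c : hasse_const D p (iota c).
  by move=> j /andP[j_gt0 _]; apply: hasse_iota.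
have [p2 | odd_p] := even_prime p_pr; first by rewrite p2 in p_gt5.
have y_parabola : 1 - iota b * y ^+ (m - 1) * y = iota a * x ^+ n.
  rewrite -mulrA -exprSr subn1 prednK ?(ltn_trans _ m_gt2) //.
  by rewrite -fermat_xy addrK.
apply: (frobenius_classical_of_parabola hasse0E hasseD hasseM hasse1 hasse_x1
  hasse_x (E := iota (a ^+ 2) * x ^+ (2 * n - 1)) (B := iota b * y ^+ (m - 1))
  charKp).
- lia.
- by apply: hasse_constM => //; apply: hasse_constX.
- by apply: hasse_constM => //; apply: hasse_constX.
- rewrite y_parabola mulf_neq0 ?fmorph_eq0 ?expf_neq0 //.
  exact: transcendental_neq0 tr_x.
- rewrite y_parabola rmorphXn -[RHS]mulrA -exprSr.
  by rewrite (_ : (2 * n - 1).+1 = n + n)%N ?exprD; [ring | lia].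
apply: fermat_frobenius_off_conic => //.
- by rewrite -cardF expf_card.
- lia.
- by rewrite oddX odd_p orbT.
- by rewrite -cardF finNzRing_gt1.
Qed.
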